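(* Let $S,T$ be left semi-braces whose associated maps $r_S$ and $r_T$ are solutions. Let $\sigma:T\to\mathrm{Aut}(S)$ be a homomorphism from $(T,\cdot)$ into the automorphism group of $(S,+,\cdot)$ (write ${}^ua=\sigma(u)(a)$), and $\delta:S\to\mathrm{End}(T)$ an anti-homomorphism from $(S,+)$ into the endomorphism semigroup of $(T,+)$ (write $u^a=\delta(a)(u)$) with $(uv)^{\lambda_a({}^ub)}+u((u^{-1})^b+w)=u(v^b+w)$ for all $a,b\in S$, $u,v,w\in T$; let $B$ be the double semidirect product $S\times T$ with $(a,u)+(b,v)=(a+b,u^b+v)$, $(a,u)(b,v)=(a\,{}^ub,uv)$. If (1) $(u^{1})^a=u^a$ and (2) $1^a+u=1+u$ for all $a\in S$ and $u\in T$ (where in (1) $1$ is the identity of $(S,\cdot)$ and in (2) $1$ is the identity of $(T,\cdot)$), then the map $r_B$ associated to $B$ is a solution.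
   Context: A left semi-brace is a triple $(S,+,\cdot)$ such that $(S,+)$ is a semigroup, $(S,\cdot)$ is a group with identity $1$, and $a(b+c)=ab+a(a^{-1}+c)$ for all $a,b,c$. Set $\lambda_a(b)=a(a^{-1}+b)$, $\rho_b(a)=(a^{-1}+b)^{-1}b$; the map associated to $X$ is $r_X(x,y)=(\lambda_x(y),\rho_y(x))$. A solution is a map $r:X\times X\to X\times X$ with $(r\times\mathrm{id})(\mathrm{id}\times r)(r\times\mathrm{id})=(\mathrm{id}\times r)(r\times\mathrm{id})(\mathrm{id}\times r)$. An automorphism of $(S,+,\cdot)$ is a bijection preserving both operations. That $\delta$ is an anti-homomorphism from $(S,+)$ means $u^{a+b}=(u^a)^b$. *)

Set Implicit Arguments.

Record is_left_semibrace (S : Type) (add mul : S -> S -> S) (inv : S -> S)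
    (one : S) : Prop := {
  sb_addA : forall a b c, add a (add b c) = add (add a b) c;
  sb_mulA : forall a b c, mul a (mul b c) = mul (mul a b) c;
  sb_mul1 : forall a, mul a one = a;
  sb_1mul : forall a, mul one a = a;
  sb_mulV : forall a, mul a (inv a) = one;
  sb_Vmul : forall a, mul (inv a) a = one;
  sb_distr : forall a b c,
      mul a (add b c) = add (mul a b) (mul a (add (inv a) c))
}.

Definition lam (S : Type) (add mul : S -> S -> S) (inv : S -> S) (a b : S) : S :=
  mul a (add (inv a) b).

Definition rho (S : Type) (add mul : S -> S -> S) (inv : S -> S) (b a : S) : S :=
  mul (inv (add (inv a) b)) b.

Definition assoc_map (S : Type) (add mul : S -> S -> S) (inv : S -> S)
    (p : S * S) : S * S :=
  (lam add mul inv (fst p) (snd p), rho add mul inv (snd p) (fst p)).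

(* Set-theoretic solution of the Yang-Baxter equation:
   (r x id)(id x r)(r x id) = (id x r)(r x id)(id x r). *)
Definition r12 (X : Type) (r : X * X -> X * X) (t : X * X * X) : X * X * X :=
  let '(x, y, z) := t in let '(x', y') := r (x, y) in (x', y', z).
Definition r23 (X : Type) (r : X * X -> X * X) (t : X * X * X) : X * X * X :=
  let '(x, y, z) := t in let '(y', z') := r (y, z) in (x, y', z').
Definition is_solution (X : Type) (r : X * X -> X * X) : Prop :=
  forall t : X * X * X,
    r12 r (r23 r (r12 r t)) = r23 r (r12 r (r23 r t)).

Definition is_automorphism (S : Type) (add mul : S -> S -> S) (f : S -> S) : Prop :=
  (exists g : S -> S, (forall x, g (f x) = x) /\ (forall x, f (g x) = x)) /\
  (forall a b, f (add a b) = add (f a) (f b)) /\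
  (forall a b, f (mul a b) = mul (f a) (f b)).

Section DSP.
Variables (S T : Type) (addS mulS : S -> S -> S) (invS : S -> S)
          (addT mulT : T -> T -> T) (invT : T -> T)
          (sigma : T -> S -> S) (delta : S -> T -> T).
Definition addB (x y : S * T) : S * T :=
  (addS (fst x) (fst y), addT (delta (fst y) (snd x)) (snd y)).
Definition mulB (x y : S * T) : S * T :=
  (mulS (fst x) (sigma (snd x) (fst y)), mulT (snd x) (snd y)).
Definition invB (x : S * T) : S * T :=
  (sigma (invT (snd x)) (invS (fst x)), invT (snd x)).
End DSP.

(* For a left semi-brace X, the map r_X is a solution exactly when
   1 + a(1 + b) = 1 + ab for all a, b.  The first components of the two sides
   of the braid relation always agree, since a |-> lambda_a is a group action,
   and multiplying the middle components on the left by them gives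
   lambda_x(1 + y(1 + z)) and lambda_x(1 + lambda_y(z)(1 + rho_z(y))); the
   condition makes these equal, and the third components then agree because
   both sides have product x(yz).  Conversely, the braid relation at (1, y, z)
   gives 1 + y(1 + z) = 1 + lambda_y(z)(1 + rho_z(y)); from this one shows that
   the kernel K = {k | 1 + k = 1} is a subgroup, that the fixed set
   H = {e | 1 + e = e} is closed under products and inverses, and that
   1 + ek = e for e in H and k in K.  Writing ab = a(1 + b) k with
   k = (1 + b)^-1 b in K then yields the condition.

   The double semidirect product B is a left semi-brace, the compatibility
   condition being the second component of its distributive law, and by (2)
   the condition for B splits into the conditions for S and T. *)
From Pilot Require Import Defs.
From Stdlib Require Import Setoid.

Definition absorbs_one_add {X : Type} (add mul : X -> X -> X) (one : X) : Prop :=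
  forall a b, add one (mul a (add one b)) = add one (mul a b).

Section LeftSemiBrace.
Context {X : Type} {add mul : X -> X -> X} {inv : X -> X} {one : X}.
Hypothesis HX : is_left_semibrace add mul inv one.

Local Notation "a + b" := (add a b).
Local Notation "a * b" := (mul a b).
Local Notation lm := (lam add mul inv).
Local Notation rh := (rho add mul inv).

Lemma mul_inv_cancel_r a b : (a * b) * inv b = a.
Proof. rewrite <- (sb_mulA HX), (sb_mulV HX), (sb_mul1 HX); reflexivity. Qed.

Lemma mul_cancel_l a b c : a * b = a * c -> b = c.
Proof.
  intro E.
  rewrite <- (sb_1mul HX b), <- (sb_1mul HX c), <- (sb_Vmul HX a),
    <- !(sb_mulA HX), E.
  reflexivity.
Qed.

Lemma inv_unique a b : a * b = one -> b = inv a.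
Proof. intro E. apply (mul_cancel_l a). rewrite (sb_mulV HX). exact E. Qed.

Lemma inv_one : inv one = one.
Proof. symmetry. apply inv_unique, (sb_mul1 HX). Qed.

Lemma inv_involutive a : inv (inv a) = a.
Proof. symmetry. apply inv_unique, (sb_Vmul HX). Qed.

Lemma inv_mul_distr a b : inv (a * b) = inv b * inv a.
Proof.
  symmetry. apply inv_unique.
  rewrite (sb_mulA HX), mul_inv_cancel_r, (sb_mulV HX). reflexivity.
Qed.

Lemma lam_one c : lm one c = one + c.
Proof. unfold lam. rewrite inv_one, (sb_1mul HX). reflexivity. Qed.

Lemma lam_mul a b c : lm (a * b) c = lm a (lm b c).
Proof.
  unfold lam.
  rewrite inv_mul_distr, <- (sb_mulA HX), (sb_distr HX), (sb_mulA HX),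
    (sb_mulV HX), (sb_1mul HX).
  reflexivity.
Qed.

Lemma lamE a b : lm a b = a * (inv a + b).
Proof. reflexivity. Qed.

Lemma one_add_lam a b : one + lm a b = lm a b.
Proof. rewrite <- lam_one, <- lam_mul, (sb_1mul HX). reflexivity. Qed.

Lemma lam_one_add a b : lm a (one + b) = lm a b.
Proof. rewrite <- lam_one, <- lam_mul, (sb_mul1 HX). reflexivity. Qed.

Lemma one_add_one_add c : one + (one + c) = one + c.
Proof. rewrite <- (lam_one c). apply one_add_lam. Qed.

Lemma add_eq_mul_lam a c : a + c = a * lm (inv a) c.
Proof.
  unfold lam. rewrite inv_involutive, (sb_mulA HX), (sb_mulV HX), (sb_1mul HX).
  reflexivity.
Qed.

(* e := 1 + 1 satisfies e + e = e, i.e. lambda_{e^-1}(e) = 1, and values of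
   lambda are fixed by 1 + _. *)
Lemma one_add_one : one + one = one.
Proof.
  set (e := one + one).
  assert (Ee : one + e = e) by apply one_add_one_add.
  assert (Eee : e * lm (inv e) e = e * one).
  { rewrite <- add_eq_mul_lam, (sb_mul1 HX).
    unfold e at 1. rewrite <- (sb_addA HX), Ee, Ee. reflexivity. }
  apply mul_cancel_l in Eee.
  pose proof (one_add_lam (inv e) e) as Hlam.
  rewrite Eee in Hlam. exact Hlam.
Qed.

Lemma mul_one_add a c : a * (one + c) = a + lm a c.
Proof. rewrite (sb_distr HX), (sb_mul1 HX). reflexivity. Qed.

Lemma lam_mul_rho a b : lm a b * rh b a = a * b.
Proof. unfold lam, rho. rewrite (sb_mulA HX), mul_inv_cancel_r. reflexivity. Qed.

Lemma mul_inv_rho a b : b * inv (rh b a) = inv a + b.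
Proof.
  unfold rho.
  rewrite inv_mul_distr, inv_involutive, (sb_mulA HX), (sb_mulV HX), (sb_1mul HX).
  reflexivity.
Qed.

Definition one_add_fixed (e : X) : Prop := one + e = e.
Definition one_add_kernel (k : X) : Prop := one + k = one.

Lemma one_add_fixed_mul_one_add e c :
  one_add_fixed e -> one + e * (one + c) = e * (one + c).
Proof. unfold one_add_fixed. intro He. rewrite mul_one_add, (sb_addA HX), He. reflexivity. Qed.

Lemma braid_first x y z : lm (lm x y) (lm (rh y x) z) = lm x (lm y z).
Proof. rewrite <- lam_mul, lam_mul_rho, lam_mul. reflexivity. Qed.

Lemma braid_lhs_first_mul_middle x y z :
  lm x (lm y z) * rh (lm (rh y x) z) (lm x y) = lm x (one + y * (one + z)).
Proof.
  rewrite <- braid_first, lam_mul_rho, (lamE (rh y x) z), (sb_mulA HX),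
    lam_mul_rho, <- (sb_mulA HX), (sb_distr HX), mul_inv_rho, <- (sb_addA HX),
    <- lamE, lam_one_add, mul_one_add.
  reflexivity.
Qed.

Lemma braid_rhs_first_mul_middle x y z :
  lm x (lm y z) * lm (rh (lm y z) x) (rh z y)
  = lm x (one + lm y z * (one + rh z y)).
Proof.
  rewrite (lamE (rh (lm y z) x)), (sb_mulA HX), lam_mul_rho, <- (sb_mulA HX),
    (sb_distr HX), mul_inv_rho, <- (sb_addA HX), <- lamE, lam_one_add,
    mul_one_add.
  reflexivity.
Qed.

Lemma absorbs_one_add_solution :
  absorbs_one_add add mul one -> is_solution (assoc_map add mul inv).
Proof.
  intros Habs [[x y] z]. cbn.
  assert (Hmiddle : rh (lm (rh y x) z) (lm x y) = lm (rh (lm y z) x) (rh z y)).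
  { apply (mul_cancel_l (lm x (lm y z))).
    rewrite braid_lhs_first_mul_middle, braid_rhs_first_mul_middle, !Habs,
      lam_mul_rho.
    reflexivity. }
  assert (Hlhs : lm (lm x y) (lm (rh y x) z) * rh (lm (rh y x) z) (lm x y)
                 * rh z (rh y x) = x * (y * z)).
  { rewrite lam_mul_rho, <- (sb_mulA HX), lam_mul_rho, (sb_mulA HX), lam_mul_rho,
      (sb_mulA HX).
    reflexivity. }
  assert (Hrhs : lm x (lm y z) * lm (rh (lm y z) x) (rh z y)
                 * rh (rh z y) (rh (lm y z) x) = x * (y * z)).
  { rewrite <- (sb_mulA HX), lam_mul_rho, (sb_mulA HX), lam_mul_rho,
      <- (sb_mulA HX), lam_mul_rho.
    reflexivity. }
  rewrite braid_first, Hmiddle in Hlhs.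
  rewrite braid_first, Hmiddle.
  f_equal.
  apply (mul_cancel_l (lm x (lm y z) * lm (rh (lm y z) x) (rh z y))).
  rewrite Hlhs, Hrhs. reflexivity.
Qed.

Lemma solution_middle_at_one :
  is_solution (assoc_map add mul inv) ->
  forall y z, one + y * (one + z) = one + lm y z * (one + rh z y).
Proof.
  intros sol y z. specialize (sol (one, y, z)). cbn in sol.
  injection sol as _ Hmiddle _.
  pose proof (braid_lhs_first_mul_middle one y z) as L.
  rewrite Hmiddle, braid_rhs_first_mul_middle, !lam_one, !one_add_one_add in L.
  symmetry. exact L.
Qed.

Lemma one_add_fixed_one_add c : one_add_fixed (one + c).
Proof. apply one_add_one_add. Qed.

Lemma one_add_fixed_mul d e :
  one_add_fixed d -> one_add_fixed e -> one_add_fixed (d * e).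
Proof.
  unfold one_add_fixed. intros Hd He.
  rewrite <- He. apply one_add_fixed_mul_one_add. exact Hd.
Qed.

Lemma one_add_fixed_kernel e : one_add_fixed e -> one_add_kernel e -> e = one.
Proof. intros He Hk. rewrite <- He. exact Hk. Qed.

Lemma lam_kernel a k : one_add_kernel k -> lm a k = lm a one.
Proof. unfold one_add_kernel. intro Hk. rewrite <- lam_one_add, Hk. reflexivity. Qed.

Lemma lam_kernel_one k : one_add_kernel k -> lm k one = one.
Proof.
  unfold one_add_kernel. intro Hk.
  assert (Ek : k = k + lm k one).
  { rewrite <- mul_one_add, one_add_one, (sb_mul1 HX). reflexivity. }
  transitivity (one + lm k one); [symmetry; apply one_add_lam |].
  rewrite <- Hk at 1. rewrite <- (sb_addA HX), <- Ek. exact Hk.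
Qed.

Lemma lam_inv_kernel_one k : one_add_kernel k -> lm (inv k) one = one.
Proof.
  intro Hk.
  rewrite <- (lam_kernel_one k Hk) at 1.
  rewrite <- lam_mul, (sb_Vmul HX), lam_one, one_add_one.
  reflexivity.
Qed.

Section MiddleAtOne.
Hypothesis middle_at_one :
  forall y z, one + y * (one + z) = one + lm y z * (one + rh z y).

Lemma one_add_kernel_inv_one_add_mul c : one_add_kernel (inv (one + c) * c).
Proof.
  pose proof (middle_at_one one c) as E.
  rewrite (sb_1mul HX), one_add_one_add, lam_one in E.
  rewrite one_add_fixed_mul_one_add in E by apply one_add_fixed_one_add.
  unfold rho in E. rewrite inv_one in E.
  unfold one_add_kernel. symmetry.
  apply (mul_cancel_l (one + c)). rewrite (sb_mul1 HX). exact E.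
Qed.

Lemma one_add_kernel_mul k k' :
  one_add_kernel k -> one_add_kernel k' -> one_add_kernel (k * k').
Proof.
  intros Hk Hk'.
  pose proof (middle_at_one k k') as E.
  unfold one_add_kernel in *.
  assert (Hlam : lm k k' = one).
  { rewrite lam_kernel by exact Hk'. apply lam_kernel_one. exact Hk. }
  assert (Hrho : rh k' k = k * k').
  { rewrite <- lam_mul_rho, Hlam, (sb_1mul HX). reflexivity. }
  rewrite Hk', (sb_mul1 HX), Hk, Hlam, Hrho, (sb_1mul HX), one_add_one_add in E.
  symmetry. exact E.
Qed.

Lemma one_add_kernel_inv k : one_add_kernel k -> one_add_kernel (inv k).
Proof.
  intro Hk.
  pose proof (middle_at_one (inv k) k) as E.
  unfold one_add_kernel in *.
  assert (Hlam : lm (inv k) k = one).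
  { rewrite lam_kernel by exact Hk. apply lam_inv_kernel_one. exact Hk. }
  assert (Hrho : rh k (inv k) = one).
  { apply (mul_cancel_l one).
    rewrite <- Hlam at 1. rewrite lam_mul_rho, (sb_Vmul HX), (sb_mul1 HX).
    reflexivity. }
  rewrite Hk, (sb_mul1 HX), Hlam, Hrho, (sb_1mul HX), !one_add_one in E.
  exact E.
Qed.

(* e (1 + e^-1) is both one_add_fixed and in one_add_kernel, hence it is 1. *)
Lemma one_add_fixed_inv e : one_add_fixed e -> one_add_fixed (inv e).
Proof.
  intro He.
  set (f := one + inv e).
  assert (Hf : one_add_fixed f) by apply one_add_fixed_one_add.
  assert (Hk : one_add_kernel (inv f * inv e))
    by apply one_add_kernel_inv_one_add_mul.
  assert (Hef : e * f = inv (inv f * inv e)).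
  { rewrite inv_mul_distr, !inv_involutive. reflexivity. }
  assert (Hef1 : e * f = one).
  { apply one_add_fixed_kernel.
    - apply one_add_fixed_mul; assumption.
    - rewrite Hef. apply one_add_kernel_inv. exact Hk. }
  apply inv_unique in Hef1. exact Hef1.
Qed.

(* (1 + dk)^-1 d is both one_add_fixed and in one_add_kernel, hence it is 1. *)
Lemma one_add_fixed_mul_kernel d k :
  one_add_fixed d -> one_add_kernel k -> one + d * k = d.
Proof.
  intros Hd Hk.
  set (d' := one + d * k).
  assert (Hd' : one_add_fixed d') by apply one_add_fixed_one_add.
  assert (Hk' : one_add_kernel (inv d' * (d * k)))
    by apply one_add_kernel_inv_one_add_mul.
  assert (Hdk : inv d' * d = (inv d' * (d * k)) * inv k)
    by (rewrite (sb_mulA HX), mul_inv_cancel_r; reflexivity).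
  assert (Hd'd : inv d' * d = one).
  { apply one_add_fixed_kernel.
    - apply one_add_fixed_mul; [apply one_add_fixed_inv |]; assumption.
    - rewrite Hdk.
      apply one_add_kernel_mul; [| apply one_add_kernel_inv]; assumption. }
  apply inv_unique in Hd'd. rewrite inv_involutive in Hd'd.
  symmetry. exact Hd'd.
Qed.

Lemma middle_at_one_absorbs_one_add : absorbs_one_add add mul one.
Proof.
  intros a b.
  set (x := a * (one + b)).
  set (k := inv (one + b) * b).
  set (d := one + x).
  assert (Hab : a * b = d * ((inv d * x) * k)).
  { unfold x, k. rewrite !(sb_mulA HX), (sb_mulV HX), (sb_1mul HX), mul_inv_cancel_r.
    reflexivity. }
  rewrite Hab, one_add_fixed_mul_kernel.
  - reflexivity.
  - apply one_add_fixed_one_add.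
  - apply one_add_kernel_mul; apply one_add_kernel_inv_one_add_mul.
Qed.

End MiddleAtOne.

Lemma solution_iff_absorbs_one_add :
  is_solution (assoc_map add mul inv) <-> absorbs_one_add add mul one.
Proof.
  split.
  - intro sol. apply middle_at_one_absorbs_one_add, solution_middle_at_one, sol.
  - apply absorbs_one_add_solution.
Qed.

End LeftSemiBrace.

Section DoubleSemidirectProduct.
Context {S T : Type} {addS mulS : S -> S -> S} {invS : S -> S} {oneS : S}
  {addT mulT : T -> T -> T} {invT : T -> T} {oneT : T}.
Hypotheses (HS : is_left_semibrace addS mulS invS oneS)
  (HT : is_left_semibrace addT mulT invT oneT).
Variables (sigma : T -> S -> S) (delta : S -> T -> T).
Hypotheses (sigma_aut : forall u, is_automorphism addS mulS (sigma u))
  (sigma_hom : forall u v a, sigma (mulT u v) a = sigma u (sigma v a)).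

Local Notation addB := (addB addS addT delta).
Local Notation mulB := (mulB mulS mulT sigma).
Local Notation invB := (invB invS invT sigma).

Lemma sigma_add u a b : sigma u (addS a b) = addS (sigma u a) (sigma u b).
Proof. apply (sigma_aut u). Qed.

Lemma sigma_mul u a b : sigma u (mulS a b) = mulS (sigma u a) (sigma u b).
Proof. apply (sigma_aut u). Qed.

Lemma sigma_one u : sigma u oneS = oneS.
Proof.
  apply (mul_cancel_l HS (sigma u oneS)).
  rewrite <- sigma_mul, !(sb_mul1 HS). reflexivity.
Qed.

Lemma sigma_id a : sigma oneT a = a.
Proof.
  destruct (sigma_aut oneT) as [[g [gK _]] _].
  rewrite <- (gK (sigma oneT a)), <- sigma_hom, (sb_mul1 HT), gK.
  reflexivity.
Qed.

Lemma sigmaK u a : sigma u (sigma (invT u) a) = a.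
Proof. rewrite <- sigma_hom, (sb_mulV HT), sigma_id. reflexivity. Qed.

Section Semibrace.
Hypotheses (delta_end : forall a u v, delta a (addT u v) = addT (delta a u) (delta a v))
  (delta_anti : forall a b u, delta (addS a b) u = delta b (delta a u))
  (compat : forall (a b : S) (u v w : T),
      addT (delta (lam addS mulS invS a (sigma u b)) (mulT u v))
           (mulT u (addT (delta b (invT u)) w))
      = mulT u (addT (delta b v) w)).

Lemma double_semidirect_semibrace : is_left_semibrace addB mulB invB (oneS, oneT).
Proof.
  constructor.
  - intros [a u] [b v] [c w]. unfold Defs.addB; cbn. f_equal.
    + apply (sb_addA HS).
    + rewrite delta_anti, delta_end. apply (sb_addA HT).
  - intros [a u] [b v] [c w]. unfold Defs.mulB; cbn. f_equal.
    + rewrite sigma_mul, sigma_hom. apply (sb_mulA HS).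
    + apply (sb_mulA HT).
  - intros [a u]. unfold Defs.mulB; cbn.
    rewrite sigma_one, (sb_mul1 HS), (sb_mul1 HT). reflexivity.
  - intros [a u]. unfold Defs.mulB; cbn.
    rewrite sigma_id, (sb_1mul HS), (sb_1mul HT). reflexivity.
  - intros [a u]. unfold Defs.mulB, Defs.invB; cbn.
    rewrite sigmaK, (sb_mulV HS), (sb_mulV HT). reflexivity.
  - intros [a u]. unfold Defs.mulB, Defs.invB; cbn.
    rewrite <- sigma_mul, (sb_Vmul HS), sigma_one, (sb_Vmul HT). reflexivity.
  - intros [a u] [b v] [c w]. unfold Defs.addB, Defs.mulB, Defs.invB; cbn.
    rewrite !sigma_add, sigmaK. f_equal.
    + apply (sb_distr HS).
    + symmetry. apply compat.
Qed.

End Semibrace.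

Lemma double_semidirect_absorbs_one_add :
  (forall a u, addT (delta a oneT) u = addT oneT u) ->
  absorbs_one_add addS mulS oneS -> absorbs_one_add addT mulT oneT ->
  absorbs_one_add addB mulB (oneS, oneT).
Proof.
  intros one_delta_add absS absT [a u] [b v].
  unfold Defs.addB, Defs.mulB; cbn.
  rewrite !one_delta_add, absT, sigma_add, sigma_one, absS.
  reflexivity.
Qed.

End DoubleSemidirectProduct.

Theorem theorem43
  (S T : Type)
  (addS mulS : S -> S -> S) (invS : S -> S) (oneS : S)
  (addT mulT : T -> T -> T) (invT : T -> T) (oneT : T)
  (HS : is_left_semibrace addS mulS invS oneS)
  (HT : is_left_semibrace addT mulT invT oneT)
  (solS : is_solution (assoc_map addS mulS invS))
  (solT : is_solution (assoc_map addT mulT invT))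
  (sigma : T -> S -> S) (delta : S -> T -> T)
  (* sigma : (T,.) -> Aut(S,+,.) is a homomorphism *)
  (sigma_aut : forall u, is_automorphism addS mulS (sigma u))
  (sigma_hom : forall u v a, sigma (mulT u v) a = sigma u (sigma v a))
  (* delta : (S,+) -> End(T,+) is an anti-homomorphism *)
  (delta_end : forall a u v, delta a (addT u v) = addT (delta a u) (delta a v))
  (delta_anti : forall a b u, delta (addS a b) u = delta b (delta a u))
  (* compatibility condition *)
  (compat : forall (a b : S) (u v w : T),
      addT (delta (lam addS mulS invS a (sigma u b)) (mulT u v))
           (mulT u (addT (delta b (invT u)) w))
      = mulT u (addT (delta b v) w))
  (* (1) (u^1)^a = u^a *)
  (H1 : forall a u, delta a (delta oneS u) = delta a u)
  (* (2) 1^a + u = 1 + u *)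
  (H2 : forall a u, addT (delta a oneT) u = addT oneT u) :
  is_solution
    (assoc_map (addB addS addT delta) (mulB mulS mulT sigma) (invB invS invT sigma)).
Proof.
  apply (solution_iff_absorbs_one_add
           (double_semidirect_semibrace HS HT sigma delta sigma_aut sigma_hom
              delta_end delta_anti compat)).
  apply (double_semidirect_absorbs_one_add HS sigma delta sigma_aut H2).
  - apply (solution_iff_absorbs_one_add HS), solS.
  - apply (solution_iff_absorbs_one_add HT), solT.
Qed.
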